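(* Let $\mathscr{O}$ be an operad in $\mathbbm{k}$-vector spaces and $\mu\in\mathscr{O}(2)$ satisfy the right Leibniz condition. Then: (1) The full subcategory $\mathcal{F}^\mu_{\mathscr{O}}\subset\mathcal{F}_{\mathscr{O}}$ is closed under the formation of subobjects, quotients and direct sums. (2) If $0\to F_1\to F_2\to F_3\to 0$ is a short exact sequence in $\mathcal{F}_{\mathscr{O}}$ with $F_1,F_3\in\mathcal{F}^\mu_{\mathscr{O}}$, then $\widetilde{\mu}_{F_2}:\delta F_2\to F_2$ factors canonically as $\delta F_2\twoheadrightarrow\delta F_3\to F_1\hookrightarrow F_2$, where the first map is $\delta(F_2\twoheadrightarrow F_3)$ and the last is the inclusion. In particular, $F_2\in\mathcal{F}^\mu_{\mathscr{O}}$ if and only if the morphism $\delta F_3\to F_1$ is zero.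
   Context: $\mathbf{Cat}\,\mathscr{O}$ is the $\mathbbm{k}$-linear PROP associated to $\mathscr{O}$ (objects $\mathbb{N}$, $\mathbf{Cat}\,\mathscr{O}(m,n)=\bigoplus_{f:\{1..m\}\to\{1..n\}}\bigotimes_i\mathscr{O}(|f^{-1}(i)|)$, $\boxplus$ = addition on objects); $\mathcal{F}_{\mathscr{O}}$ is the abelian category of $\mathbbm{k}$-linear functors $\mathbf{Cat}\,\mathscr{O}\to\mathbbm{k}$-vector spaces. $\delta F(n)=F(n+1)$, $\xi$ acting by $F(\xi\boxplus\mathrm{Id}_1)$ ($\delta$ is exact). For $1\le i\le n$, $\mu_i(n)\in\mathbf{Cat}\,\mathscr{O}(n+1,n)$ is given by the map $j\mapsto j$ ($j\le n$), $n+1\mapsto i$, identity on singleton fibres and $\mu$ with inputs $(i,n+1)$ over $i$. The right Leibniz condition: $\mu\circ(\nu\boxplus\mathrm{Id}_1)=\nu\circ\sum_i\mu_i(n)$ in $\mathscr{O}(n+1)$ for all $n$, $\nu\in\mathscr{O}(n)$; under it the maps $\widetilde\mu_F(n)=F(\sum_i\mu_i(n))$ form a natural transformation $\widetilde\mu_F:\delta F\to F$, natural in $F$. $\mathcal{F}^\mu_{\mathscr{O}}$ is the full subcategory of $F$ with $\widetilde\mu_F=0$. *)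

From Stdlib Require List.
From HB Require Import structures.
From mathcomp Require Import all_boot all_order all_algebra all_fingroup.
Set Implicit Arguments. Unset Strict Implicit. Unset Printing Implicit Defensive.
Import GRing.Theory.
Local Open Scope ring_scope.

(* Operads in K-vector spaces, in the "partial composition" presentation.     *)
(* Indices are 0-based.  Conventions (the endomorphism-operad model):        *)
(*   (x . s)(v_0,..,v_{n-1})      = x(v_{s 0},..,v_{s (n-1)})  (right action)*)
(*   (x o_i y)(v_0,..)            = x(v_0,..,v_{i-1}, y(v_i,..,v_{i+m-1}),..)*)
Record operad (K : fieldType) := Operad {
  ob : nat -> lmodType K;
  oact : forall n, 'S_n -> ob n -> ob n;
  ocomp : forall l m, nat -> ob l -> ob m -> ob (l + m - 1)%N;
  ounit : ob 1 }.

Section Defs.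
Variables (K : fieldType) (O : operad K).

Definition ops := {a : nat & ob O a}.
Definition op_ a (x : ob O a) : ops := existT (fun a => ob O a) a x.

(* transport along an equality of arities (0 when arities differ: never used) *)
Definition ocast a b (x : ob O a) : ob O b :=
  match @eqP _ a b with
  | ReflectT e => eq_rect a (ob O) x b e
  | ReflectF _ => 0
  end.

Definition pcomp (i : nat) (x y : ops) : ops :=
  op_ (@ocomp K O (tag x) (tag y) i (projT2 x) (projT2 y)).

(* the permutation of 'I_n given by a nat function (identity if not a bijection) *)
Definition pfun n (h : nat -> nat) : 'S_n :=
  insubd (1%g : 'S_n) [ffun p : 'I_n => insubd p (h p)].

Definition pnat n (s : 'S_n) (b : nat) : nat :=
  match (insub b : option 'I_n) with Some b' => val (s b') | None => b end.

Definition sact (x : ops) (h : nat -> nat) : ops :=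
  op_ (@oact K O (tag x) (pfun (tag x) h) (projT2 x)).

Definition is_operad : Prop :=
  (
      (forall n (s : 'S_n) a (x y : ob O n),
          oact s (a *: x + y) = a *: oact s x + oact s y) /\
      (forall l m i a (x y : ob O l) (z : ob O m),
          ocomp i (a *: x + y) z = a *: ocomp i x z + ocomp i y z) /\
      (forall l m i a (x : ob O l) (y z : ob O m),
          ocomp i x (a *: y + z) = a *: ocomp i x y + ocomp i x z) /\
      (forall n (x : ob O n), oact 1%g x = x) /\
      (forall n (s t : 'S_n) (x : ob O n), oact t (oact s x) = oact (s * t)%g x) /\
      (forall n (x : ob O n), pcomp 0 (op_ (ounit O)) (op_ x) = op_ x) /\
      (forall n (x : ob O n) i, (i < n)%N -> pcomp i (op_ x) (op_ (ounit O)) = op_ x) /\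
      (forall l m n (x : ob O l) (y : ob O m) (z : ob O n) i j,
          (i < l)%N -> (j < m)%N ->
          pcomp (i + j) (pcomp i (op_ x) (op_ y)) (op_ z)
          = pcomp i (op_ x) (pcomp j (op_ y) (op_ z))) /\
      (forall l m n (x : ob O l) (y : ob O m) (z : ob O n) i k,
          (i < k < l)%N ->
          pcomp (k + m - 1) (pcomp i (op_ x) (op_ y)) (op_ z)
          = pcomp i (pcomp k (op_ x) (op_ z)) (op_ y)))
  /\
  (forall l m (x : ob O l) (y : ob O m) i (t : 'S_m), (i < l)%N ->
      pcomp i (op_ x) (op_ (oact t y))
      = sact (pcomp i (op_ x) (op_ y))
             (fun a => if (i <= a < i + m)%N then (i + pnat t (a - i))%N else a))
  /\
  (forall l m (x : ob O l) (y : ob O m) i (s : 'S_l), (i < l)%N ->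
      let j := pnat s^-1%g i in
      let e c := if (c < i)%N then c else (c + m - 1)%N in
      pcomp i (op_ (oact s x)) (op_ y)
      = sact (pcomp j (op_ x) (op_ y))
             (fun p => if (p < j)%N then e (pnat s p)
                       else if (p < j + m)%N then (i + (p - j))%N
                       else e (pnat s (p - m + 1)))).

(* The PROP Cat O.  A pure morphism m -> n is a map f : 'I_m -> 'I_n together *)
(* with a decoration xi : 'I_n -> ops, xi i in O(|f^-1(i)|), the inputs of    *)
(* xi i labelled by the fibre f^-1(i) in increasing order.  General morphisms *)
(* are linear combinations of (tensors of) these.                             *)
Definition fib m n (f : 'I_m -> 'I_n) (i : 'I_n) : seq 'I_m :=
  [seq j <- enum 'I_m | f j == i].

Definition wf m n (f : 'I_m -> 'I_n) (xi : 'I_n -> ops) : Prop :=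
  forall i, tag (xi i) = size (fib f i).

Definition gamma (x : ops) (ys : seq ops) : ops :=
  foldr (fun p acc => pcomp p.1 acc p.2) x (zip (iota 0 (size ys)) ys).

Definition compdec m n p (g : 'I_n -> 'I_p) (xi' : 'I_p -> ops)
    (f : 'I_m -> 'I_n) (xi : 'I_n -> ops) : 'I_p -> ops :=
  fun k =>
    let Ln := flatten [seq [seq val j | j <- fib f i] | i <- fib g k] in
    let Nn := [seq val j | j <- fib (g \o f) k] in
    sact (gamma (xi' k) [seq xi i | i <- fib g k])
         (fun q => index (nth 0%N Ln q) Nn).

(* K-linear functors Cat O -> K-vector spaces, given on pure morphisms *)
Record functorO := FunctorO {
  Fob : nat -> lmodType K;
  Fmor : forall m n, ('I_m -> 'I_n) -> ('I_n -> ops) -> Fob m -> Fob n }.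
Arguments Fmor f {m n} _ _ _.

Definition upd n (xi : 'I_n -> ops) (i : 'I_n) (s : ops) : 'I_n -> ops :=
  fun j => if j == i then s else xi j.

Definition is_functorO (F : functorO) : Prop :=
  [/\ (forall m n (f : 'I_m -> 'I_n) xi a (u v : Fob F m),
          Fmor F f xi (a *: u + v) = a *: Fmor F f xi u + Fmor F f xi v),
      (forall m n (f : 'I_m -> 'I_n) xi, wf f xi ->
         forall i (x y : ob O (tag (xi i))) a (v : Fob F m),
           Fmor F f (upd xi i (op_ (a *: x + y))) v
           = a *: Fmor F f (upd xi i (op_ x)) v + Fmor F f (upd xi i (op_ y)) v),
      (forall n (v : Fob F n), Fmor F (@id 'I_n) (fun _ => op_ (ounit O)) v = v) &
      (forall m n p (f : 'I_m -> 'I_n) xi (g : 'I_n -> 'I_p) xi',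
         wf f xi -> wf g xi' -> forall v : Fob F m,
           Fmor F (g \o f) (compdec g xi' f xi) v = Fmor F g xi' (Fmor F f xi v)) ].

Definition is_nat (F G : functorO) (phi : forall n, Fob F n -> Fob G n) : Prop :=
  (forall n a (u v : Fob F n), phi n (a *: u + v) = a *: phi n u + phi n v) /\
  (forall m n (f : 'I_m -> 'I_n) xi, wf f xi -> forall v : Fob F m,
      phi n (Fmor F f xi v) = Fmor G f xi (phi m v)).


Definition fplus1 m n (f : 'I_m -> 'I_n) : 'I_m.+1 -> 'I_n.+1 :=
  fun j => if unlift ord_max j is Some j' then lift ord_max (f j') else ord_max.
Definition decplus1 n (xi : 'I_n -> ops) : 'I_n.+1 -> ops :=
  fun k => if unlift ord_max k is Some k' then xi k' else op_ (ounit O).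

Definition delta (F : functorO) : functorO :=
  @FunctorO (fun n => Fob F n.+1)
            (fun m n f xi => Fmor F (fplus1 f) (decplus1 xi)).

Definition muf n (i : 'I_n) : 'I_n.+1 -> 'I_n :=
  fun j => if unlift ord_max j is Some j' then j' else i.
Definition mudec (mu : ob O 2) n (i : 'I_n) : 'I_n -> ops :=
  fun k => if k == i then op_ mu else op_ (ounit O).

Definition mut (mu : ob O 2) (F : functorO) n (v : Fob F n.+1) : Fob F n :=
  \sum_(i < n) Fmor F (muf i) (mudec mu i) v.


Definition inFmu (mu : ob O 2) (F : functorO) : Prop :=
  forall n (v : Fob F n.+1), @mut mu F n v = 0.

(* right Leibniz condition, as an identity in Cat O(n+1, 1) = O(n+1) *)
Definition el1 (xi : 'I_1 -> ops) (N : nat) : ob O N := ocast N (projT2 (xi ord0)).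

Definition right_leibniz (mu : ob O 2) : Prop :=
  forall n (nu : ob O n),
    el1 (compdec (fun _ : 'I_2 => (ord0 : 'I_1)) (fun _ => op_ mu)
                 (fplus1 (fun _ : 'I_n => (ord0 : 'I_1)))
                 (decplus1 (fun _ : 'I_1 => op_ nu))) n.+1
    = \sum_(i < n) el1 (compdec (fun _ : 'I_n => (ord0 : 'I_1)) (fun _ => op_ nu)
                               (muf i) (mudec mu i)) n.+1.

Definition is_dsum (J : Type) (Fj : J -> functorO) (F : functorO)
    (iota : forall j n, Fob (Fj j) n -> Fob F n) : Prop :=
  forall n,
    (forall v : Fob F n, exists s : seq {j : J & Fob (Fj j) n},
        v = \sum_(q <- s) iota (projT1 q) n (projT2 q)) /\
    (forall s : seq {j : J & Fob (Fj j) n},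
        List.NoDup (map (@projT1 _ _) s) ->
        \sum_(q <- s) iota (projT1 q) n (projT2 q) = 0 ->
        forall q, List.In q s -> projT2 q = 0).

Definition short_exact (F1 F2 F3 : functorO)
    (i : forall n, Fob F1 n -> Fob F2 n) (p : forall n, Fob F2 n -> Fob F3 n) : Prop :=
  @is_nat F1 F2 i /\ @is_nat F2 F3 p /\
  forall n, injective (i n) /\ (forall w, exists v, p n v = w) /\
            (forall v, p n v = 0 <-> exists u, v = i n u).

End Defs.

Arguments is_nat {K O} F G phi.
Arguments short_exact {K O} F1 F2 F3 i p.
Arguments is_dsum {K O J} Fj F iota.
Arguments mut {K O} mu F {n} v.
Arguments inFmu {K O} mu F.
Arguments right_leibniz {K O} mu.
Arguments delta {K O} F.
Arguments is_functorO {K O} F.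
Arguments is_operad {K} O.

From Pilot Require Import Defs.
From Stdlib Require List.
From Stdlib Require Import FunctionalExtensionality.
From HB Require Import structures.
From mathcomp Require Import all_boot all_order all_algebra all_fingroup.
From mathcomp Require Import zify.
Set Implicit Arguments. Unset Strict Implicit. Unset Printing Implicit Defensive.
Import GRing.Theory.
Local Open Scope ring_scope.

(* μ̃ is natural in F for formal reasons, which gives closure of F^μ under subobjects,
   quotients and sums.  Naturality in the source is where the right Leibniz condition
   enters: μ_k(n) ∘ (f ⊞ Id_1) and Σ_(f j = k) f ∘ μ_j(m) are F applied to one map whose
   decorations differ only over k, where they are the two sides of the Leibniz identity
   for ν = ξ_k.  For 0 → F1 → F2 → F3 → 0 with F1, F3 in F^μ, naturality in F shows that
   μ̃_F2 lands in ker p = im i and kills ker δp = im δi, so it factors uniquely as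
   i ∘ ψ ∘ δp, and ψ is natural because μ̃_F2 is. *)

Section LinearMaps.
Variables (R : pzRingType) (U V : lmodType R) (h : U -> V).
Hypothesis h_lin : linear h.

Lemma linB (u v : U) : h (u - v) = h u - h v.
Proof. by rewrite -scaleN1r addrC h_lin scaleN1r addrC. Qed.

Lemma lin0 : h 0 = 0.
Proof. by have := linB 0 0; rewrite !subrr. Qed.

Lemma linD (u v : U) : h (u + v) = h u + h v.
Proof. by have := h_lin 1 u v; rewrite !scale1r. Qed.

Lemma lin_sum (I : Type) (r : seq I) (P : pred I) (F : I -> U) :
  h (\sum_(x <- r | P x) F x) = \sum_(x <- r | P x) h (F x).
Proof. exact: (big_morph h linD lin0). Qed.

End LinearMaps.

Lemma index_map_in (T1 T2 : eqType) (lab : T1 -> T2) (s : seq T1) x :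
  uniq (map lab s) -> x \in s -> index (lab x) (map lab s) = index x s.
Proof.
elim: s => [|y s IH] //= /andP [lab_y_notin uniq_s]; rewrite inE.
case: eqVneq => [-> _|y_neq_x /= x_in_s]; first by rewrite !eqxx.
have -> : (lab y == lab x) = false.
  by apply: contraNF lab_y_notin => /eqP ->; apply: map_f.
by rewrite IH.
Qed.

Definition fibv m n (f : 'I_m -> 'I_n) (i : 'I_n) : seq nat := [seq val j | j <- fib f i].

Definition extend m n (f : 'I_m -> 'I_n) (c : 'I_n) : 'I_m.+1 -> 'I_n :=
  fun j => if unlift ord_max j is Some j' then f j' else c.

Section Fibres.
Variables m n : nat.
Implicit Types (f : 'I_m -> 'I_n) (i c : 'I_n).

Lemma filter_enum_ordSr (T : eqType) (g : 'I_m.+1 -> T) (t : T) :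
  [seq j <- enum 'I_m.+1 | g j == t] =
  [seq lift ord_max j | j <- enum 'I_m & g (lift ord_max j) == t]
  ++ (if g ord_max == t then [:: ord_max] else [::]).
Proof.
have -> : enum 'I_m.+1 = rcons [seq lift ord_max j | j <- enum 'I_m] ord_max.
  rewrite enum_ordSr; congr rcons; apply: eq_map => j.
  by apply: val_inj; rewrite /= /bump leqNgt ltn_ord.
rewrite filter_rcons -cats1 filter_map.
by case: ifP; rewrite ?cats0.
Qed.

Lemma map_val_lift_max (s : seq 'I_m) :
  [seq val j | j <- [seq lift ord_max j | j <- s]] = [seq val j | j <- s].
Proof. by rewrite -map_comp; apply: eq_map => j /=; rewrite /bump leqNgt ltn_ord. Qed.

Lemma fib_fplus1_lift f i : fib (fplus1 f) (lift ord_max i) = map (lift ord_max) (fib f i).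
Proof.
rewrite /fib filter_enum_ordSr /fplus1 unlift_none (negbTE (neq_lift _ _)) cats0.
by congr map; apply: eq_filter => j; rewrite liftK (inj_eq (@lift_inj _ _)).
Qed.

Lemma fib_fplus1_max f : fib (fplus1 f) ord_max = [:: ord_max].
Proof.
rewrite /fib filter_enum_ordSr /fplus1 unlift_none eqxx.
rewrite (eq_filter (a2 := pred0)) ?filter_pred0 // => j.
by rewrite liftK eq_sym (negbTE (neq_lift _ _)).
Qed.

Lemma fibv_fplus1_lift f i : fibv (fplus1 f) (lift ord_max i) = fibv f i.
Proof. by rewrite /fibv fib_fplus1_lift map_val_lift_max. Qed.

Lemma fibv_fplus1_max f : fibv (fplus1 f) ord_max = [:: m].
Proof. by rewrite /fibv fib_fplus1_max. Qed.

Lemma fib_extend f c i :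
  fib (extend f c) i
  = map (lift ord_max) (fib f i) ++ (if c == i then [:: ord_max] else [::]).
Proof.
rewrite /fib filter_enum_ordSr /extend unlift_none; congr (map _ _ ++ _).
by apply: eq_filter => j; rewrite liftK.
Qed.

Lemma fibv_extend f c i : fibv (extend f c) i = fibv f i ++ (if c == i then [:: m] else [::]).
Proof. by rewrite /fibv fib_extend map_cat map_val_lift_max; case: ifP. Qed.

Lemma fib_uniq f i : uniq (fib f i).
Proof. by rewrite filter_uniq ?enum_uniq. Qed.

Lemma fibv_uniq f i : uniq (fibv f i).
Proof. by rewrite (map_inj_uniq val_inj) fib_uniq. Qed.

Lemma mem_fib f i j : (j \in fib f i) = (f j == i).
Proof. by rewrite mem_filter mem_enum andbT. Qed.

Lemma fib_const (g : 'I_m -> 'I_1) (i : 'I_1) : fib g i = enum 'I_m.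
Proof. by rewrite /fib (eq_filter (a2 := predT)) ?filter_predT // => j; rewrite !ord1. Qed.

Lemma comp_muf_fplus1 f c : muf c \o fplus1 f = extend f c.
Proof.
apply: functional_extensionality => j; rewrite /= /extend /muf /fplus1.
by case: (unliftP ord_max j) => [j' _|_]; rewrite ?liftK ?unlift_none.
Qed.

Lemma comp_muf f (j : 'I_m) : f \o muf j = extend f (f j).
Proof. by apply: functional_extensionality => k; rewrite /= /extend /muf; case: unlift. Qed.

End Fibres.

Lemma fib_muf n (i j : 'I_n) :
  fib (muf i) j = lift ord_max j :: (if i == j then [:: ord_max] else [::]).
Proof.
by rewrite [muf i]/(extend id i) fib_extend /fib filter_pred1_uniq ?enum_uniq ?mem_enum.
Qed.

Lemma fibv_muf n (i j : 'I_n) : fibv (muf i) j = val j :: (if i == j then [:: n] else [::]).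
Proof. by rewrite /fibv fib_muf /= /bump leqNgt ltn_ord; case: ifP. Qed.

Lemma size_fib_comp m n p (f : 'I_m -> 'I_n) (g : 'I_n -> 'I_p) k :
  size (fib (g \o f) k) = \sum_(i <- fib g k) size (fib f i).
Proof.
rewrite [in LHS]/fib size_filter -sum1_count.
rewrite (partition_big f (fun i => g i == k)) => [|//].
rewrite /fib big_filter big_enum_cond.
apply: eq_big => [i | i /eqP g_i]; first by rewrite inE.
rewrite size_filter -sum1_count; apply: eq_bigl => j /=.
by case: (eqVneq (f j) i) => [-> | _]; rewrite ?andbF ?andbT ?g_i ?eqxx.
Qed.

Section Operations.
Variables (K : fieldType) (O : operad K).
Implicit Types x : ops O.

Lemma op_eta x : x = op_ (projT2 x).
Proof. by case: x. Qed.

Lemma op_ocast x N : tag x = N -> op_ (ocast N (projT2 x)) = x.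
Proof.
case: x => a y /= <-; rewrite /ocast; case: eqP => // e.
by rewrite (eq_axiomK e).
Qed.

Lemma sact_ext x (h h' : nat -> nat) :
  (forall q, (q < tag x)%N -> h q = h' q) -> sact x h = sact x h'.
Proof.
move=> hh'; rewrite /sact /pfun; congr (op_ (oact (insubd _ _) _)).
by apply/ffunP => q; rewrite !ffunE hh'.
Qed.

Lemma pfun_id n (h : nat -> nat) : (forall q, (q < n)%N -> h q = q) -> pfun n h = 1%g.
Proof.
move=> h_id; have id_ffun : [ffun q : 'I_n => insubd q (h q)] = [ffun q => q].
  by apply/ffunP => q; rewrite !ffunE h_id // valKd.
apply/permP => q; rewrite perm1 -pvalE /pfun id_ffun val_insubd.
have -> : injectiveb [ffun q : 'I_n => q] by apply/injectiveP => a b; rewrite !ffunE.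
by rewrite ffunE.
Qed.

Lemma tag_gamma x (ys : seq (ops O)) :
  tag x = size ys -> tag (gamma x ys) = sumn [seq tag y | y <- ys].
Proof.
suff tag_foldr st x' : tag x' = (st + size ys)%N ->
    tag (foldr (fun p acc => Defs.pcomp p.1 acc p.2) x' (zip (iota st (size ys)) ys))
    = (st + sumn [seq tag y | y <- ys])%N by exact: (tag_foldr 0%N).
elim: ys st x' => [|y ys IH] st x' /= tag_x; first by rewrite addn0 in tag_x *.
by rewrite IH ?tag_x ?addSnnS //; lia.
Qed.

Lemma tag_gamma_fib m n p (g : 'I_n -> 'I_p) (xi' : 'I_p -> ops O)
    (f : 'I_m -> 'I_n) (xi : 'I_n -> ops O) k :
  wf g xi' -> wf f xi ->
  tag (gamma (xi' k) [seq xi i | i <- fib g k])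
  = size (flatten [seq fibv f i | i <- fib g k]).
Proof.
move=> wf_g wf_f; rewrite tag_gamma ?size_map ?wf_g // size_flatten /shape -!map_comp.
by congr sumn; apply: eq_map => i /=; rewrite wf_f size_map.
Qed.

Lemma sact_relabel (x : ops O) (lab : nat -> nat) (L N : seq nat) :
  (tag x <= size L)%N -> {subset L <= N} -> uniq (map lab N) ->
  sact x (fun q => index (nth 0%N (map lab L) q) (map lab N))
  = sact x (fun q => index (nth 0%N L q) N).
Proof.
move=> tag_x sub_LN uniq_N; apply: sact_ext => q q_lt.
have q_lt' : (q < size L)%N by apply: leq_trans tag_x.
by rewrite (nth_map 0%N) // index_map_in // sub_LN // mem_nth.
Qed.

Lemma wf_fplus1 m n (f : 'I_m -> 'I_n) (xi : 'I_n -> ops O) :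
  wf f xi -> wf (fplus1 f) (decplus1 xi).
Proof.
move=> wf_f i; rewrite /decplus1; case: (unliftP ord_max i) => [j ->|->].
  by rewrite fib_fplus1_lift size_map wf_f.
by rewrite fib_fplus1_max.
Qed.

Lemma wf_muf (mu : ob O 2) n (i : 'I_n) : wf (muf i) (mudec mu i).
Proof. by move=> j; rewrite fib_muf /mudec eq_sym; case: (i == j). Qed.

Lemma wf_const m (y : ob O m) :
  wf (fun _ : 'I_m => ord0 : 'I_1) (fun _ => op_ y).
Proof. by move=> i; rewrite fib_const size_enum_ord. Qed.

Lemma wf_compdec m n p (g : 'I_n -> 'I_p) (xi' : 'I_p -> ops O)
    (f : 'I_m -> 'I_n) (xi : 'I_n -> ops O) :
  wf g xi' -> wf f xi -> wf (g \o f) (compdec g xi' f xi).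
Proof.
move=> wf_g wf_f k; rewrite [tag _]/= (tag_gamma_fib _ wf_g wf_f) size_fib_comp.
rewrite size_flatten sumnE !big_map; apply: eq_bigr => i _; exact: size_map.
Qed.

End Operations.

Section OperadUnits.
Variables (K : fieldType) (O : operad K).
Hypothesis O_operad : is_operad O.
Implicit Types (x s : ops O).

Lemma oact1 n (y : ob O n) : oact 1%g y = y.
Proof. by case: O_operad => [[_ [_ [_ [-> _]]]] _]. Qed.

Lemma unit_pcomp n (y : ob O n) : Defs.pcomp 0 (op_ (ounit O)) (op_ y) = op_ y.
Proof. by case: O_operad => [[_ [_ [_ [_ [_ [-> _]]]]]] _]. Qed.

Lemma pcomp_unit n (y : ob O n) i :
  (i < n)%N -> Defs.pcomp i (op_ y) (op_ (ounit O)) = op_ y.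
Proof. by case: O_operad => [[_ [_ [_ [_ [_ [_ [unit_r _]]]]]]] _]; apply: unit_r. Qed.

Lemma sact_id x (h : nat -> nat) : (forall q, (q < tag x)%N -> h q = q) -> sact x h = x.
Proof. by move=> h_id; rewrite /sact (pfun_id h_id) oact1 -op_eta. Qed.

Lemma gamma_unit_l s : gamma (op_ (ounit O)) [:: s] = s.
Proof. by rewrite /gamma /= [s]op_eta unit_pcomp. Qed.

Lemma gamma_unit_r (T : Type) x (r : seq T) :
  (size r <= tag x)%N -> gamma x [seq op_ (ounit O) | _ <- r] = x.
Proof.
rewrite /gamma size_map.
suff foldr_units st : (st + size r <= tag x)%N ->
    foldr (fun p acc => Defs.pcomp p.1 acc p.2) x
      (zip (iota st (size r)) [seq op_ (ounit O) | _ <- r]) = x.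
  exact: (foldr_units 0%N).
elim: r st => [|_ r IH] st //= r_le; rewrite IH ?addSnnS //.
rewrite {1}[x]op_eta pcomp_unit -?op_eta //.
by apply: leq_trans r_le; rewrite addnS ltnS leq_addr.
Qed.

End OperadUnits.

Section CompositeDecorations.
Variables (K : fieldType) (O : operad K).
Hypothesis O_operad : is_operad O.

Lemma compdec_sorted m n p (g : 'I_n -> 'I_p) (xi' : 'I_p -> ops O)
    (f : 'I_m -> 'I_n) (xi : 'I_n -> ops O) k :
  wf g xi' -> wf f xi ->
  flatten [seq fibv f i | i <- fib g k] = fibv (g \o f) k ->
  compdec g xi' f xi k = gamma (xi' k) [seq xi i | i <- fib g k].
Proof.
move=> wf_g wf_f sorted; apply: (sact_id O_operad) => q.
rewrite (tag_gamma_fib _ wf_g wf_f) sorted => q_lt.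
by rewrite -[[seq val j | j <- fib _ k]]/(fibv _ k) -sorted index_uniq ?sorted ?fibv_uniq.
Qed.

Variables (mu : ob O 2) (m n : nat) (f : 'I_m -> 'I_n) (xi : 'I_n -> ops O).
Hypothesis wf_xi : wf f xi.

Lemma compdec_muf_fplus1_neq k k' :
  k' != k -> compdec (muf k) (mudec mu k) (fplus1 f) (decplus1 xi) k' = xi k'.
Proof.
move=> k'_neq_k; have k_neq_k' : (k == k') = false by rewrite eq_sym (negbTE k'_neq_k).
rewrite (compdec_sorted (wf_muf mu k) (wf_fplus1 wf_xi)) fib_muf k_neq_k' /=.
  by rewrite /decplus1 liftK /mudec eq_sym k_neq_k' gamma_unit_l.
by rewrite fibv_fplus1_lift cats0 comp_muf_fplus1 fibv_extend k_neq_k' cats0.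
Qed.

Lemma compdec_muf_fplus1_eq k :
  compdec (muf k) (mudec mu k) (fplus1 f) (decplus1 xi) k
  = gamma (op_ mu) [:: xi k; op_ (ounit O)].
Proof.
rewrite (compdec_sorted (wf_muf mu k) (wf_fplus1 wf_xi)) fib_muf eqxx /=.
  by rewrite /decplus1 liftK unlift_none /mudec eqxx.
by rewrite fibv_fplus1_lift fibv_fplus1_max cats0 comp_muf_fplus1 fibv_extend eqxx.
Qed.

Lemma compdec_muf_neq (j : 'I_m) k :
  f j != k -> compdec f xi (muf j) (mudec mu j) k = xi k.
Proof.
move=> fj_neq_k.
have j_notin i : i \in fib f k -> (j == i) = false.
  by rewrite mem_fib => /eqP fi_k; apply: contraNF fj_neq_k => /eqP ->; rewrite fi_k.
rewrite (compdec_sorted wf_xi (wf_muf mu j)).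
  have -> : [seq mudec mu j i | i <- fib f k] = [seq op_ (ounit O) | _ <- fib f k].
    by apply/eq_in_map => i /j_notin; rewrite /mudec eq_sym => ->.
  by rewrite gamma_unit_r // wf_xi.
rewrite comp_muf fibv_extend (negbTE fj_neq_k) cats0.
have -> : [seq fibv (muf j) i | i <- fib f k] = [seq [:: val i] | i <- fib f k].
  by apply/eq_in_map => i /j_notin; rewrite fibv_muf => ->.
by rewrite flatten_map1.
Qed.

(* Over k the decoration of f ∘ μ_j is ν ∘ μ_a(N) with ν = ξ_k, N the size of the fibre
   and a the rank of j in it; [lab] maps the inputs of the latter onto the former. *)
Lemma compdec_muf_eq k (a : 'I_(size (fib f k))) :
  compdec f xi (muf (tnth (in_tuple (fib f k)) a)) (mudec mu (tnth (in_tuple (fib f k)) a)) k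
  = compdec (fun _ : 'I_(size (fib f k)) => ord0 : 'I_1) (fun _ => xi k)
            (muf a) (mudec mu a) ord0.
Proof.
set N := size (fib f k); set t := in_tuple (fib f k).
have t_inj : injective (tnth t) by apply/tuple_uniqP; apply: fib_uniq.
have map_fib (T : Type) (g : 'I_m -> T) :
    [seq g i | i <- fib f k] = [seq g (tnth t b) | b <- enum 'I_N].
  by rewrite (map_comp g (tnth t)) map_tnth_enum.
have f_ta : f (tnth t a) = k by apply/eqP; rewrite -mem_fib mem_tnth.
have wf_xi_k : wf (fun _ : 'I_N => ord0 : 'I_1) (fun _ => xi k).
  by move=> i; rewrite fib_const size_enum_ord wf_xi.
pose lab := nth 0%N (fibv f k ++ [:: m]).
have lab_val (b : 'I_N) : lab b = val (tnth t b).
  rewrite /lab nth_cat size_map ltn_ord (nth_map (tnth t b)) ?ltn_ord //.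
  by rewrite [in RHS](tnth_nth (tnth t b)).
have lab_N : lab N = m by rewrite /lab nth_cat size_map ltnn subnn.
have fibv_k : fibv (extend f k) k = map lab (iota 0 N.+1).
  rewrite fibv_extend eqxx -{1}(mkseq_nth 0%N (fibv f k ++ [:: m])).
  by rewrite size_cat size_map addn1.
have fibv_a : flatten [seq fibv (muf (tnth t a)) i | i <- fib f k]
              = map lab (flatten [seq fibv (muf a) b | b <- enum 'I_N]).
  rewrite map_fib map_flatten -map_comp; congr flatten; apply: eq_map => b /=.
  by rewrite !fibv_muf (inj_eq t_inj) /= lab_val; case: eqP => //= _; rewrite lab_N.
have mudec_t :
    [seq mudec mu (tnth t a) i | i <- fib f k] = [seq mudec mu a b | b <- enum 'I_N].
  by rewrite map_fib; apply: eq_map => b; rewrite /mudec (inj_eq t_inj).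
rewrite /compdec comp_muf f_ta fib_const mudec_t.
rewrite -[[seq val j | j <- fib (extend f k) k]]/(fibv _ _) fibv_k.
rewrite fibv_a fib_const val_enum_ord sact_relabel -?fibv_k ?fibv_uniq //.
  by have := tag_gamma_fib ord0 wf_xi_k (wf_muf mu a); rewrite fib_const => ->.
move=> q /flatten_mapP [b _]; rewrite fibv_muf mem_iota add0n ltnS !inE.
rewrite leq0n andTb; case: (a == b); rewrite ?inE ?orbF.
  by case/orP => /eqP ->; [exact: ltnW (ltn_ord b) | exact: leqnn].
by move=> /eqP ->; exact: ltnW (ltn_ord b).
Qed.

End CompositeDecorations.

(* The two sides μ ∘ (ν ⊞ Id_1) and ν ∘ μ_i(n) of the right Leibniz condition. *)
Section LeibnizSides.
Variables (K : fieldType) (O : operad K) (mu : ob O 2) (n : nat) (nu : ob O n).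

Definition comp_mu_nu1 : ops O :=
  compdec (fun _ : 'I_2 => ord0 : 'I_1) (fun _ => op_ mu)
          (fplus1 (fun _ : 'I_n => ord0 : 'I_1)) (decplus1 (fun _ : 'I_1 => op_ nu)) ord0.

Definition comp_nu_mu (i : 'I_n) : ops O :=
  compdec (fun _ : 'I_n => ord0 : 'I_1) (fun _ => op_ nu) (muf i) (mudec mu i) ord0.

Lemma tag_comp_mu_nu1 : tag comp_mu_nu1 = n.+1.
Proof.
rewrite (wf_compdec (wf_const mu) (wf_fplus1 (wf_const nu))).
by rewrite fib_const size_enum_ord.
Qed.

Lemma tag_comp_nu_mu i : tag (comp_nu_mu i) = n.+1.
Proof.
by rewrite (wf_compdec (wf_const nu) (wf_muf mu i)) fib_const size_enum_ord.
Qed.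

Lemma comp_mu_nu1E :
  is_operad O -> comp_mu_nu1 = gamma (op_ mu) [:: op_ nu; op_ (ounit O)].
Proof.
move=> O_operad; have muf0 : (fun _ : 'I_2 => ord0 : 'I_1) = muf ord0.
  by apply: functional_extensionality => j; rewrite !ord1.
have mudec0 : (fun _ : 'I_1 => op_ mu) = mudec mu ord0.
  by apply: functional_extensionality => j; rewrite /mudec ord1 eqxx.
rewrite /comp_mu_nu1 muf0 mudec0.
exact: (compdec_muf_fplus1_eq O_operad mu (wf_const nu)).
Qed.

End LeibnizSides.

Lemma right_leibnizE (K : fieldType) (O : operad K) (mu : ob O 2) :
  right_leibniz mu -> forall n (nu : ob O n),
  ocast n.+1 (projT2 (comp_mu_nu1 mu nu))
  = \sum_(i < n) ocast n.+1 (projT2 (comp_nu_mu mu nu i)).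
Proof. by []. Qed.

Section FunctorMaps.
Variables (K : fieldType) (O : operad K) (F : functorO O).
Hypothesis F_functor : is_functorO F.
Local Notation Fm := (@Fmor _ _ F _ _).

Lemma Fmor_linear m n (f : 'I_m -> 'I_n) xi : linear (Fm f xi).
Proof. by case: F_functor => F_lin _ _ _ a u v; apply: F_lin. Qed.

Lemma Fmor_comp m n p (f : 'I_m -> 'I_n) xi (g : 'I_n -> 'I_p) xi' v :
  wf f xi -> wf g xi' -> Fm g xi' (Fm f xi v) = Fm (g \o f) (compdec g xi' f xi) v.
Proof. by case: F_functor => _ _ _ F_comp wf_f wf_g; rewrite F_comp. Qed.

Lemma Fmor_upd_sum m n (h : 'I_m -> 'I_n) (B : 'I_n -> ops O) k T v
    (I : Type) (r : seq I) (Y : I -> ob O T) :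
  wf h B -> T = tag (B k) ->
  Fm h (upd B k (op_ (\sum_(i <- r) Y i))) v
  = \sum_(i <- r) Fm h (upd B k (op_ (Y i))) v.
Proof.
case: F_functor => _ F_multilin _ _ wf_B T_k; subst T.
exact: (lin_sum (fun a y z => F_multilin _ _ h B wf_B k y z a v)).
Qed.

Variable mu : ob O 2.

Lemma mut_linear n : linear (@mut _ _ mu F n).
Proof.
move=> a u v; rewrite /mut scaler_sumr -big_split /=.
by apply: eq_bigr => i _; rewrite Fmor_linear.
Qed.

Hypotheses (O_operad : is_operad O) (mu_leibniz : right_leibniz mu).

Lemma Fmor_muf_fplus1 m n (f : 'I_m -> 'I_n) xi v k : wf f xi ->
  Fm (muf k) (mudec mu k) (Fm (fplus1 f) (decplus1 xi) v)
  = \sum_(j < m | f j == k) Fm f xi (Fm (muf j) (mudec mu j) v).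
Proof.
move=> wf_xi; rewrite (Fmor_comp _ (wf_fplus1 wf_xi) (wf_muf mu k)) comp_muf_fplus1.
rewrite (eq_bigr (fun j => Fm (extend f k) (compdec f xi (muf j) (mudec mu j)) v)); last first.
  by move=> j /eqP f_j; rewrite (Fmor_comp _ (wf_muf mu j) wf_xi) comp_muf f_j.
have sum_fib (G : 'I_m -> Fob F n) :
    \sum_(j < m | f j == k) G j = \sum_(j <- fib f k) G j.
  by rewrite /fib big_filter big_enum_cond; apply: eq_bigl => j; rewrite inE.
rewrite sum_fib big_tnth.
set D := compdec _ _ _ _; set N := size (fib f k); set t := in_tuple (fib f k).
pose nu : ob O N := ocast N (projT2 (xi k)).
have xi_k : op_ nu = xi k by apply: op_ocast; rewrite wf_xi.
have wf_D : wf (extend f k) D.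
  by rewrite -comp_muf_fplus1; apply: wf_compdec; [apply: wf_muf | apply: wf_fplus1].
have D_k : D = upd D k (op_ (ocast N.+1 (projT2 (comp_mu_nu1 mu nu)))).
  apply: functional_extensionality => i; rewrite /upd; case: eqP => // ->.
  by rewrite op_ocast ?tag_comp_mu_nu1 // comp_mu_nu1E // xi_k /D compdec_muf_fplus1_eq.
rewrite D_k right_leibnizE // Fmor_upd_sum //; last first.
  by rewrite wf_D fib_extend size_cat size_map eqxx addn1.
apply: eq_bigr => a _; congr (Fm _ _ v); apply: functional_extensionality => i; rewrite /upd.
case: eqP => [-> | /eqP i_neq_k].
  by rewrite op_ocast ?tag_comp_nu_mu // /comp_nu_mu xi_k compdec_muf_eq.
have f_ta : f (tnth t a) = k by apply/eqP; rewrite -mem_fib mem_tnth.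
by rewrite /D compdec_muf_fplus1_neq ?compdec_muf_neq // f_ta eq_sym.
Qed.

Lemma mut_fplus1 m n (f : 'I_m -> 'I_n) xi v : wf f xi ->
  mut mu F (Fm (fplus1 f) (decplus1 xi) v) = Fm f xi (mut mu F v).
Proof.
move=> wf_xi; rewrite /mut (lin_sum (Fmor_linear f xi)) (partition_big f xpredT) //=.
by apply: eq_bigr => k _; rewrite Fmor_muf_fplus1.
Qed.

End FunctorMaps.

Section Closure.
Variables (K : fieldType) (O : operad K) (mu : ob O 2).

Lemma mut_natural (F G : functorO O) (phi : forall n, Fob F n -> Fob G n) :
  is_nat F G phi -> forall n (v : Fob F n.+1), phi n (mut mu F v) = mut mu G (phi n.+1 v).
Proof.
case=> phi_lin phi_nat n v; rewrite /mut (lin_sum (phi_lin n)).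
by apply: eq_bigr => i _; apply: phi_nat; apply: wf_muf.
Qed.

Lemma inFmu_sub (F G : functorO O) (phi : forall n, Fob G n -> Fob F n) :
  is_nat G F phi -> (forall n, injective (phi n)) -> inFmu mu F -> inFmu mu G.
Proof.
move=> phi_nat phi_inj F_mu n v; apply: phi_inj.
by rewrite mut_natural // F_mu (lin0 (phi_nat.1 n)).
Qed.

Lemma inFmu_quo (F G : functorO O) (phi : forall n, Fob F n -> Fob G n) :
  is_nat F G phi -> (forall n w, exists v, phi n v = w) -> inFmu mu F -> inFmu mu G.
Proof.
move=> phi_nat phi_surj F_mu n w; have [v <-] := phi_surj _ w.
by rewrite -mut_natural // F_mu (lin0 (phi_nat.1 n)).
Qed.

Lemma inFmu_dsum (J : Type) (Fj : J -> functorO O) (F : functorO O)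
    (iota : forall j n, Fob (Fj j) n -> Fob F n) :
  is_functorO F -> (forall j, is_nat (Fj j) F (iota j)) -> is_dsum Fj F iota ->
  (forall j, inFmu mu (Fj j)) -> inFmu mu F.
Proof.
move=> F_functor iota_nat F_dsum Fj_mu n v; have [s ->] := (F_dsum n.+1).1 v.
rewrite (lin_sum (mut_linear F_functor mu (n := n))) big1 // => q _.
by rewrite -mut_natural // Fj_mu (lin0 ((iota_nat _).1 n)).
Qed.

End Closure.

Section Extension.
Variables (K : fieldType) (O : operad K) (mu : ob O 2) (F1 F2 F3 : functorO O).
Variables (i : forall n, Fob F1 n -> Fob F2 n) (p : forall n, Fob F2 n -> Fob F3 n).
Hypotheses (i_nat : is_nat F1 F2 i) (p_nat : is_nat F2 F3 p).
Hypothesis i_inj : forall n, injective (@i n).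
Hypothesis p_surj : forall n (w : Fob F3 n), exists v, p v = w.
Hypothesis ker_p : forall n (v : Fob F2 n), p v = 0 <-> exists u, v = i u.
Hypotheses (F2_functor : is_functorO F2) (F1_mu : inFmu mu F1) (F3_mu : inFmu mu F3).

Lemma mut_in_image n (v : Fob F2 n.+1) : exists u, mut mu F2 v = i u.
Proof. by apply/ker_p; rewrite (mut_natural mu p_nat) F3_mu. Qed.

Lemma mut_factors n (v v' : Fob F2 n.+1) : p v = p v' -> mut mu F2 v = mut mu F2 v'.
Proof.
move=> pv_eq; have /ker_p [u uv] : p (v - v') = 0.
  by rewrite (linB (p_nat.1 _)) pv_eq subrr.
apply/eqP; rewrite -subr_eq0 -(linB (mut_linear F2_functor mu (n := n))) uv.
by rewrite -(mut_natural mu i_nat) F1_mu (lin0 (i_nat.1 n)).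
Qed.

Lemma ex_preimage n (w : Fob F3 n) : exists v, p v == w.
Proof. by have [v <-] := p_surj w; exists v. Qed.

Lemma ex_psi n (w : Fob F3 n.+1) :
  exists u, i u == mut mu F2 (xchoose (ex_preimage w)).
Proof. by have [u ->] := mut_in_image (xchoose (ex_preimage w)); exists u. Qed.

(* ψ w is the i-preimage of μ̃ v for a chosen p-preimage v of w. *)
Definition psi n (w : Fob (delta F3) n) : Fob F1 n := xchoose (ex_psi w).

Lemma psi_spec n (v : Fob F2 n.+1) : mut mu F2 v = i (psi (p v)).
Proof.
rewrite (eqP (xchooseP (ex_psi _))); apply: mut_factors.
by rewrite (eqP (xchooseP (ex_preimage _))).
Qed.

Lemma psi_unique (psi' : forall n, Fob (delta F3) n -> Fob F1 n) :
  (forall n (v : Fob F2 n.+1), mut mu F2 v = i (psi' n (p v))) ->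
  forall n w, psi' n w = psi w.
Proof.
move=> psi'_spec n w; have [v <-] := p_surj w.
by apply: i_inj; rewrite -psi'_spec psi_spec.
Qed.

Lemma inFmu_iff_psi0 : inFmu mu F2 <-> forall n (w : Fob (delta F3) n), psi w = 0.
Proof.
split=> [F2_mu n w | psi0 n v]; last by rewrite psi_spec psi0 (lin0 (i_nat.1 n)).
by have [v <-] := p_surj w; apply: i_inj; rewrite -psi_spec F2_mu (lin0 (i_nat.1 n)).
Qed.

Hypotheses (O_operad : is_operad O) (mu_leibniz : right_leibniz mu).

Lemma psi_is_nat : is_nat (delta F3) F1 psi.
Proof.
split=> [n a w1 w2 | m n f xi wf_xi w].
  have [v1 <-] := p_surj w1; have [v2 <-] := p_surj w2; apply: i_inj.
  by rewrite (i_nat.1 n) -!psi_spec -(p_nat.1 n.+1) -psi_spec (mut_linear F2_functor).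
have [v <-] := p_surj w; apply: i_inj.
rewrite i_nat.2 // -psi_spec -mut_fplus1 // psi_spec.
by rewrite (p_nat.2 _ _ _ _ (wf_fplus1 wf_xi)).
Qed.

End Extension.

Theorem proposition3p13 (K : fieldType) (O : operad K) (mu : ob O 2) :
  is_operad O -> right_leibniz mu ->
  (* (1) closure under subobjects *)
  ((forall (F G : functorO O) (phi : forall n, Fob G n -> Fob F n),
      is_functorO F -> is_functorO G -> is_nat G F phi ->
      (forall n, injective (phi n)) ->
      inFmu mu F -> inFmu mu G)
   (* closure under quotients *)
   /\ (forall (F G : functorO O) (phi : forall n, Fob F n -> Fob G n),
      is_functorO F -> is_functorO G -> is_nat F G phi ->
      (forall n (w : Fob G n), exists v, phi n v = w) ->
      inFmu mu F -> inFmu mu G)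
   (* closure under direct sums *)
   /\ (forall (J : Type) (Fj : J -> functorO O) (F : functorO O)
         (iota : forall j n, Fob (Fj j) n -> Fob F n),
      (forall j, is_functorO (Fj j)) -> is_functorO F ->
      (forall j, is_nat (Fj j) F (iota j)) -> is_dsum Fj F iota ->
      (forall j, inFmu mu (Fj j)) -> inFmu mu F))
  /\
  (* (2) *)
  (forall (F1 F2 F3 : functorO O)
          (i : forall n, Fob F1 n -> Fob F2 n) (p : forall n, Fob F2 n -> Fob F3 n),
     is_functorO F1 -> is_functorO F2 -> is_functorO F3 ->
     short_exact F1 F2 F3 i p -> inFmu mu F1 -> inFmu mu F3 ->
     exists psi : forall n, Fob (delta F3) n -> Fob F1 n,
       is_nat (delta F3) F1 psi
       /\ (forall n (v : Fob F2 n.+1), mut mu F2 v = i n (psi n (p n.+1 v)))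
       /\ (forall psi' : forall n, Fob (delta F3) n -> Fob F1 n,
             (forall n (v : Fob F2 n.+1), mut mu F2 v = i n (psi' n (p n.+1 v))) ->
             forall n w, psi' n w = psi n w)
       /\ (inFmu mu F2 <-> forall n (w : Fob (delta F3) n), psi n w = 0)).
Proof.
move=> O_operad mu_leibniz; split; [split; [|split] |].
- by move=> F G phi _ _; apply: inFmu_sub.
- by move=> F G phi _ _; apply: inFmu_quo.
- by move=> J Fj F iota _; apply: inFmu_dsum.
move=> F1 F2 F3 i p _ F2_functor _ [i_nat [p_nat exact_at]] F1_mu F3_mu.
have i_inj n := (exact_at n).1.
have p_surj n := (exact_at n).2.1.
have ker_p n := (exact_at n).2.2.
exists (psi p_nat p_surj ker_p F3_mu); split; first exact: psi_is_nat.
split; first exact: psi_spec.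
by split; [apply: psi_unique | apply: inFmu_iff_psi0].
Qed.
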